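(* Let $n\ge 3$ and let $K$ be a proper $4$-coloring of $H_2(n,n-1)$. (1) If $T(K)=\{(x,y): x+y\in\{f_i,f_j\}\}$ for some $1\le i<j\le n$, then $K$ is the $(i,j)$-coordinate coloring (up to renaming of colors), i.e. its color classes are the four sets $\{x\in\mathbb{Z}_2^n: (x_i,x_j)=(a,b)\}$, $a,b\in\mathbb{Z}_2$. (2) If $T(K)=\{(x,y): x+y\in\{\mathbb{1},f_j\}\}$ for some $j\in\{1,\dots,n\}$, then $n$ is even and the color classes of $K$ are the four sets $\mathcal{A}^{\nu}_{\mu}=\{v\in\mathbb{Z}_2^n: \mathrm{wt}(v)\equiv \nu \pmod 2,\ v_j=\mu\}$, $\nu,\mu\in\{0,1\}$. As a consequence, every proper $4$-coloring $K$ of $H_2(n,n-1)$ with $\mathrm{rb}(K)=\frac{2}{n+1}$ is even.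
   Context: $H_2(n,n-1)$ is the simple undirected graph with vertex set $\mathbb{Z}_2^n$ in which $x,y$ are adjacent iff their Hamming distance is at least $n-1$; $\mathrm{wt}$ is Hamming weight. $e_k$ is the $k$-th standard basis vector, $\mathbb{1}$ the all-ones vector, $f_k=e_k+\mathbb{1}$. For a proper $k$-coloring $K$ of a simple graph $G=(V,E)$, an edge $(x,y)$ is a transition edge if swapping the colors of $x$ and $y$ (all other colors unchanged) yields again a proper $k$-coloring; $T(K)$ is the set of transition edges and $\mathrm{rb}(K)=|T(K)|/|E|$. A coloring is even if all color classes have the same cardinality. *)

From mathcomp Require Import all_boot all_order all_algebra.
Set Implicit Arguments. Unset Strict Implicit. Unset Printing Implicit Defensive.
Import GRing.Theory Num.Theory.

(* Vertices of H_2(n,n-1): Z_2^n as boolean vectors indexed by 'I_n. *)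
Definition vtx (n : nat) := {ffun 'I_n -> bool}.

Definition vadd n (x y : vtx n) : vtx n := [ffun k => x k (+) y k].
Definition evec n (k : 'I_n) : vtx n := [ffun m => m == k].
Definition one_vec n : vtx n := [ffun => true].
Definition fvec n (k : 'I_n) : vtx n := vadd (evec k) (one_vec n).

Definition wt n (x : vtx n) : nat := #|[set k | x k]|.
Definition hdist n (x y : vtx n) : nat := #|[set k | x k != y k]|.

Definition adj n (x y : vtx n) : bool := (x != y) && (n.-1 <= hdist x y).

Definition coloring n k := {ffun vtx n -> 'I_k}.

Definition proper_col n k (K : coloring n k) : bool :=
  [forall x, forall y, adj x y ==> (K x != K y)].

Definition swapc n k (K : coloring n k) (x y : vtx n) : coloring n k :=
  [ffun z => if z == x then K y else if z == y then K x else K z].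

Definition transition n k (K : coloring n k) (x y : vtx n) : bool :=
  adj x y && proper_col (swapc K x y).

Definition edges n : {set {set vtx n}} :=
  [set [set x; y] | x in vtx n, y in vtx n & adj x y].

Definition trans_edges n k (K : coloring n k) : {set {set vtx n}} :=
  [set [set x; y] | x in vtx n, y in vtx n & transition K x y].

Definition rb n k (K : coloring n k) : rat :=
  (#|trans_edges K|%:R / #|edges n|%:R)%R.

Definition color_classes n k (K : coloring n k) : {set {set vtx n}} :=
  [set [set x | K x == c] | c : 'I_k].

Definition even_coloring n k (K : coloring n k) : Prop :=
  forall c c' : 'I_k, #|[set x | K x == c]| = #|[set x | K x == c']|.

Definition edges_with_sum n (S : pred (vtx n)) : {set {set vtx n}} :=
  [set [set x; y] | x in vtx n, y in vtx n & adj x y && S (vadd x y)].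

From mathcomp Require Import all_boot all_order all_algebra.
From mathcomp Require Import zify.
Set Implicit Arguments. Unset Strict Implicit. Unset Printing Implicit Defensive.
Import GRing.Theory Num.Theory.

(* H_2(n,n-1) is the Cayley graph of Z_2^n for the n+1 generators 1, f_1, ..., f_n.  If xy is
   a transition edge of a proper coloring K, then y is the only neighbour of x with color K y,
   since otherwise the swap would be improper.  With four colors this leaves room for at most two
   transition neighbours at each vertex (as n >= 3), and a vertex with two transition neighbours
   sees the fourth color on all its other neighbours.

   In case (1), z and z + e_m (m <> i, j) are non-transition neighbours of z + 1, so K is
   invariant under translation by e_m and factors through x |-> (x_i, x_j).  In case (2), z and
   z + e_m + e_k (m, k <> j) are non-transition neighbours of z + f_m, so K factors through
   x |-> (wt x mod 2, x_j); for odd n the adjacent vertices 0 and f_j would then share a color.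
   In both cases the keys of the generators are the three nonzero vectors of Z_2^2, so any two
   distinct keys are carried by adjacent vertices and the factor is injective.

   If rb K = 2/(n+1), then |T(K)| = 2^n, so every vertex has exactly two transition neighbours.
   Weighting transition edges by n-1 and the other edges by 1, every vertex then has total
   weight n-1 towards each other color class, and double counting the weight between two
   classes A and B gives |A| (n-1) = |B| (n-1). *)

Section Vectors.
Variable n : nat.
Implicit Types x y z s : vtx n.

Definition vzero : vtx n := [ffun => false].

Lemma vaddE x y k : vadd x y k = x k (+) y k.
Proof. by rewrite ffunE. Qed.

Lemma vaddC x y : vadd x y = vadd y x.
Proof. by apply/ffunP=> k; rewrite !vaddE addbC. Qed.

Lemma vaddKv x y : vadd x (vadd x y) = y.
Proof. by apply/ffunP=> k; rewrite !vaddE addKb. Qed.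

Lemma vaddK x y : vadd (vadd x y) y = x.
Proof. by apply/ffunP=> k; rewrite !vaddE addbK. Qed.

Lemma vadd0v x : vadd vzero x = x.
Proof. by apply/ffunP=> k; rewrite vaddE ffunE. Qed.

Lemma vadd_inj x : injective (vadd x).
Proof. exact: can_inj (vaddKv x). Qed.

Lemma vadd_eq0 x y : (vadd x y == vzero) = (x == y).
Proof.
apply/eqP/eqP => [/ffunP xy|->]; last by apply/ffunP => k; rewrite vaddE ffunE addbb.
by apply/ffunP => k; move: (xy k); rewrite vaddE ffunE; case: (x k); case: (y k).
Qed.

Lemma evecE (k m : 'I_n) : evec k m = (m == k).
Proof. by rewrite ffunE. Qed.

Lemma fvecE (k m : 'I_n) : fvec k m = (m != k).
Proof. by rewrite vaddE !ffunE addbT. Qed.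

Lemma fvec_inj : injective (@fvec n).
Proof. by move=> k k' /ffunP /(_ k); rewrite !fvecE eqxx => /esym/negbFE/eqP. Qed.

Lemma one_vec_neq_fvec k : one_vec n != fvec k.
Proof. by apply/eqP => /ffunP /(_ k); rewrite fvecE ffunE eqxx. Qed.

Lemma vadd_one_fvec x m : vadd (vadd x (one_vec n)) (fvec m) = vadd x (evec m).
Proof. by apply/ffunP=> k; rewrite !vaddE !ffunE; case: (x k); case: (k == m). Qed.

Lemma vadd_fvec_fvec x m m' :
  vadd (vadd x (fvec m)) (fvec m') = vadd x (vadd (evec m) (evec m')).
Proof. by apply/ffunP=> k; rewrite !ffunE; case: (x k); case: (k == m); case: (k == m'). Qed.

Lemma exists_neq (k : 'I_n) : 1 < n -> exists m : 'I_n, m != k.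
Proof.
move=> n_gt1; have n_gt0 := ltnW n_gt1.
case: (eqVneq k (Ordinal n_gt0)) => [->|]; first by exists (Ordinal n_gt1).
by exists (Ordinal n_gt0); rewrite eq_sym.
Qed.

End Vectors.

Lemma ord_neq_gt1 n (i j : 'I_n) : i != j -> 1 < n.
Proof. by move: (ltn_ord i) (ltn_ord j); rewrite -val_eqE /=; lia. Qed.

Lemma odd_pred n : 0 < n -> odd n.-1 = ~~ odd n.
Proof. by case: n => //= n _; rewrite negbK. Qed.

Section Weight.
Variable n : nat.
Implicit Types x y : vtx n.

Lemma hdistE x y : hdist x y = wt (vadd x y).
Proof. by apply: eq_card => k; rewrite !inE vaddE; case: (x k); case: (y k). Qed.

Lemma wt0 : wt (vzero n) = 0.
Proof. by apply: eq_card0 => k; rewrite !inE ffunE. Qed.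

Lemma wt_one : wt (one_vec n) = n.
Proof. by rewrite -[RHS]card_ord; apply: eq_card => k; rewrite !inE ffunE. Qed.

Lemma wt_fvec (k : 'I_n) : wt (fvec k) = n.-1.
Proof.
by rewrite -[in RHS](card_ord n) -(cardsC1 k); apply: eq_card => m; rewrite !inE fvecE.
Qed.

Lemma wt_evec (k : 'I_n) : wt (evec k) = 1.
Proof. by rewrite -(cards1 k); apply: eq_card => m; rewrite !inE evecE. Qed.

Lemma wt_vadd x y : wt (vadd x y) + 2 * #|[set k | x k && y k]| = wt x + wt y.
Proof.
rewrite /wt; set X := [set k | x k]; set Y := [set k | y k].
have -> : [set k | x k && y k] = X :&: Y by apply/setP=> k; rewrite !inE.
have -> : [set k | vadd x y k] = (X :|: Y) :\: (X :&: Y).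
  by apply/setP=> k; rewrite !inE vaddE; case: (x k); case: (y k).
have sIU : X :&: Y \subset X :|: Y := subset_trans (subsetIl X Y) (subsetUl X Y).
rewrite cardsDS // -cardsUI; have := subset_leq_card sIU; lia.
Qed.

Lemma odd_wt_vadd x y : odd (wt (vadd x y)) = odd (wt x) (+) odd (wt y).
Proof. by rewrite -oddD -wt_vadd oddD oddM addbF. Qed.

Lemma wt_point (j : 'I_n) (b : bool) : wt [ffun m => (m == j) && b] = b.
Proof.
case: b; last by apply: eq_card0 => m; rewrite !inE ffunE andbF.
by rewrite /= -(cards1 j); apply: eq_card => m; rewrite !inE ffunE andbT.
Qed.

Lemma odd_wt_supp2 (j k : 'I_n) x : j != k ->
  (forall m, m != j -> m != k -> ~~ x m) -> odd (wt x) = x j (+) x k.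
Proof.
move=> jk supp.
have -> : wt x = wt (vadd [ffun m => (m == j) && x j] [ffun m => (m == k) && x k]).
  congr wt; apply/ffunP => m; rewrite vaddE !ffunE.
  case: (eqVneq m j) => [->|mj]; first by rewrite (negbTE jk) addbF.
  by case: (eqVneq m k) => [->//|mk]; rewrite (negbTE (supp m mj mk)).
by rewrite odd_wt_vadd !wt_point !oddb.
Qed.

End Weight.

Section Graph.
Variable n : nat.
Implicit Types x y s : vtx n.

Definition is_gen s := (s != vzero n) && (n.-1 <= wt s).

Lemma adjE x y : adj x y = is_gen (vadd x y).
Proof. by rewrite /adj /is_gen hdistE vadd_eq0. Qed.

Lemma adj_sym : symmetric (@adj n).
Proof. by move=> x y; rewrite !adjE vaddC. Qed.

Lemma adj_irr : irreflexive (@adj n).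
Proof. by move=> x; rewrite /adj eqxx. Qed.

Lemma adj_vadd x s : adj x (vadd x s) = is_gen s.
Proof. by rewrite adjE vaddKv. Qed.

Lemma card_vtx : #|vtx n| = 2 ^ n.
Proof. by rewrite card_ffun card_bool card_ord. Qed.

Hypothesis n_gt1 : 1 < n.

Lemma is_gen_one : is_gen (one_vec n).
Proof.
rewrite /is_gen wt_one leq_pred andbT.
by apply/eqP => /ffunP /(_ (Ordinal (ltnW n_gt1))); rewrite !ffunE.
Qed.

Lemma is_gen_fvec k : is_gen (fvec k).
Proof.
rewrite /is_gen wt_fvec leqnn andbT; have [m mk] := exists_neq k n_gt1.
by apply/eqP => /ffunP /(_ m); rewrite fvecE ffunE mk.
Qed.

Lemma is_genP s : is_gen s = (s == one_vec n) || [exists k, s == fvec k].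
Proof.
apply/idP/idP; last first.
  by case/orP=> [/eqP->|/existsP[k /eqP->]]; rewrite ?is_gen_one ?is_gen_fvec.
case/andP=> _ wt_s.
have : #|[set k | ~~ s k]| <= 1.
  have -> : [set k | ~~ s k] = ~: [set k | s k] by apply/setP => k; rewrite !inE.
  by have := cardsC [set k | s k]; move: wt_s; rewrite card_ord /wt; lia.
rewrite leq_eqVlt ltnS leqn0 => /orP[/cards1P[k zero_s]|/eqP/cards0_eq zero_s].
- apply/orP; right; apply/existsP; exists k; apply/eqP/ffunP=> m.
  by move/setP: zero_s => /(_ m); rewrite fvecE !inE; case: (s m) => /= <-.
- apply/orP; left; apply/eqP/ffunP=> m.
  by move/setP: zero_s => /(_ m); rewrite ffunE !inE; case: (s m).
Qed.

Lemma card_is_gen : #|[set s | is_gen s]| = n.+1.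
Proof.
have -> : [set s | is_gen s] = one_vec n |: [set fvec k | k : 'I_n].
  apply/setP=> s; rewrite !inE is_genP; congr (_ || _).
  by apply/existsP/imsetP => [[k /eqP ->]|[k _ ->]]; exists k.
rewrite cardsU1 card_imset ?card_ord; last exact: fvec_inj.
by case: imsetP => // [[k _ one_fvec]]; case/eqP: (one_vec_neq_fvec k).
Qed.

Lemma card_adj x : #|[set y | adj x y]| = n.+1.
Proof.
rewrite -card_is_gen -(card_imset _ (@vadd_inj _ x)).
apply: eq_card => y; rewrite !inE; apply/imsetP/idP => [[z]|gen_y].
  by rewrite inE adjE => + ->.
by exists (vadd x y); rewrite ?inE ?adj_vadd ?vaddKv.
Qed.

End Graph.

Lemma eq_set2 (T : finType) (a b x y : T) :
  [set a; b] = [set x; y] -> (a = x /\ b = y) \/ (a = y /\ b = x).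
Proof.
move=> ab_xy.
have ax : a \in [set x; y] by rewrite -ab_xy set21.
have bx : b \in [set x; y] by rewrite -ab_xy set22.
have xa : x \in [set a; b] by rewrite ab_xy set21.
have ya : y \in [set a; b] by rewrite ab_xy set22.
move: xa ya; case/set2P: ax => ->; case/set2P: bx => ->.
- by rewrite !inE !orbb => _ /eqP ->; left.
- by left.
- by right.
- by rewrite !inE !orbb => /eqP -> _; right.
Qed.

Lemma card_edges_sum (T : finType) (r : rel T) : symmetric r -> irreflexive r ->
  #|[set [set x; y] | x in T, y in T & r x y]| * 2 = \sum_x #|[set y | r x y]|.
Proof.
move=> r_sym r_irr; set E := [set [set x; y] | x in T, y in T & r x y].
rewrite (eq_bigr (fun x => \sum_(y | r x y) 1)) => [|x _]; last by rewrite sum1dep_card.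
rewrite pair_big_dep (partition_big (fun p : T * T => [set p.1; p.2]) (mem E)) /=;
  last by move=> [x y] /= xy; apply/imset2P; exists x y; rewrite ?inE.
rewrite -sum_nat_const; apply: eq_bigr => e /imset2P[x y _]; rewrite inE => /andP[_ xy] ->.
rewrite sum1_card (eq_card (B := mem [set (x, y); (y, x)])) => [|[a b]].
  by rewrite cards2; case: eqP => // [[x_y _]]; move: xy; rewrite x_y r_irr.
rewrite unfold_in !inE /=; apply/andP/orP => [[_ /eqP/eq_set2[[-> ->]|[-> ->]]]|].
- by left.
- by right.
- by case=> /eqP[-> ->]; rewrite ?[r y x]r_sym xy // setUC.
Qed.

Lemma card_edges n : 1 < n -> #|edges n| * 2 = 2 ^ n * n.+1.
Proof.
move=> n_gt1; rewrite card_edges_sum; [|exact: adj_sym|exact: adj_irr].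
by under eq_bigr do rewrite card_adj //; rewrite sum_nat_const card_vtx.
Qed.

Lemma proper_adj n k (K : coloring n k) x y : proper_col K -> adj x y -> K x != K y.
Proof. by move/forallP/(_ x)/forallP/(_ y)/implyP. Qed.

Section Transitions.
Variables (n k : nat) (K : coloring n k).
Hypothesis K_proper : proper_col K.
Implicit Types x y z : vtx n.
Local Notation tr := (transition K).

Lemma transition_adj x y : tr x y -> adj x y.
Proof. by case/andP. Qed.

Lemma transition_sym : symmetric tr.
Proof.
move=> x y; rewrite /transition adj_sym; case: (eqVneq x y) => [->//|xy].
congr (_ && proper_col _); apply/ffunP => z; rewrite !ffunE.
by case: (eqVneq z x) => [->|//]; rewrite (negbTE xy).
Qed.

Lemma transition_uniq x y z : tr x y -> adj x z -> K z = K y -> z = y.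
Proof.
case/andP=> _ swap_proper xz Kzy; apply/eqP/negPn/negP => zy.
have zx : z != x by apply: contraTneq xz => ->; rewrite adj_irr.
have := proper_adj swap_proper xz.
by rewrite !ffunE eqxx (negbTE zx) (negbTE zy) Kzy eqxx.
Qed.

Lemma card_trans_edges : #|trans_edges K| * 2 = \sum_x #|[set y | tr x y]|.
Proof.
apply: card_edges_sum; first exact: transition_sym.
by move=> x; apply/negbTE/negP => /transition_adj; rewrite adj_irr.
Qed.

Lemma transitionE (S : pred (vtx n)) : trans_edges K = edges_with_sum S ->
  forall x y, tr x y = adj x y && S (vadd x y).
Proof.
move=> TS x y; apply/idP/idP => xy.
- have : [set x; y] \in trans_edges K by apply/imset2P; exists x y; rewrite ?inE.
  rewrite TS => /imset2P[x' y' _]; rewrite inE => xy' /eq_set2[[-> ->]|[-> ->]] //.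
  by rewrite adj_sym vaddC.
- have : [set x; y] \in edges_with_sum S by apply/imset2P; exists x y; rewrite ?inE.
  rewrite -TS => /imset2P[x' y' _]; rewrite inE => xy' /eq_set2[[-> ->]|[-> ->]] //.
  by rewrite transition_sym.
Qed.

Lemma card_colors_transition_nbrs x y1 y2 :
  tr x y1 -> tr x y2 -> y1 != y2 -> #|(K x |: [set K y1; K y2])| = 3.
Proof.
move=> xy1 xy2 y12.
have Kxy1 := proper_adj K_proper (transition_adj xy1).
have Kxy2 := proper_adj K_proper (transition_adj xy2).
have Ky12 : K y1 != K y2.
  apply: contra y12 => /eqP Ky12; apply/eqP.
  exact: transition_uniq xy2 (transition_adj xy1) Ky12.
by rewrite cardsU1 cards2 !inE negb_or Kxy1 Kxy2 Ky12.
Qed.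

Lemma nontransition_nbr_color x y1 y2 z : tr x y1 -> tr x y2 ->
  adj x z -> ~~ tr x z -> K z \notin (K x |: [set K y1; K y2]).
Proof.
move=> xy1 xy2 xz not_xz; rewrite !inE eq_sym (negbTE (proper_adj K_proper xz)) /=.
by apply/norP; split; apply: contra not_xz => /eqP/(transition_uniq _ xz) ->.
Qed.

End Transitions.

Lemma fourth_color (S : {set 'I_4}) u v : #|S| = 3 -> u \notin S -> v \notin S -> u = v.
Proof.
move=> S3; rewrite -!in_setC.
have : #|~: S| = 1 by have := cardsC S; rewrite card_ord S3; lia.
by move/eqP/cards1P => [w ->] /set1P-> /set1P->.
Qed.

Section FourColorings.
Variables (n : nat) (K : coloring n 4).
Hypothesis K_proper : proper_col K.
Implicit Types x y z : vtx n.
Local Notation tr := (transition K).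

Lemma nontransition_nbrs_same_color x y1 y2 z z' : tr x y1 -> tr x y2 -> y1 != y2 ->
  adj x z -> ~~ tr x z -> adj x z' -> ~~ tr x z' -> K z = K z'.
Proof.
move=> xy1 xy2 y12 xz not_xz xz' not_xz'.
by apply: (fourth_color (card_colors_transition_nbrs K_proper xy1 xy2 y12));
  apply: nontransition_nbr_color.
Qed.

Lemma card_transition_nbrs_le2 x : 2 < n -> #|[set y | tr x y]| <= 2.
Proof.
move=> n_gt2; set Y := [set y | tr x y].
have K_inj : {in Y &, injective K}.
  by move=> y1 y2; rewrite !inE => xy1 xy2; apply: transition_uniq xy2 (transition_adj xy1).
have KY : K @: Y \subset [set~ K x].
  apply/subsetP => c /imsetP[y]; rewrite !inE => xy ->.
  by rewrite eq_sym (proper_adj K_proper (transition_adj xy)).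
have card_KY : #|K @: Y| = #|Y| by rewrite card_in_imset.
have := subset_leq_card KY; rewrite cardsC1 card_ord card_KY /= => Y_le3.
rewrite leqNgt; apply/negP => Y_gt2.
have KY_full : K @: Y = [set~ K x].
  by apply/eqP; rewrite eqEcard KY cardsC1 card_ord card_KY.
have : [set y | adj x y] \subset Y.
  apply/subsetP => z; rewrite inE => xz.
  have : K z \in K @: Y by rewrite KY_full !inE eq_sym (proper_adj K_proper xz).
  by case/imsetP => y; rewrite inE => xy Kzy; rewrite inE (transition_uniq xy xz Kzy).
by move/subset_leq_card/leq_trans/(_ Y_le3); rewrite (card_adj (ltnW n_gt2)); lia.
Qed.

End FourColorings.

Section EvenColorings.
Variables (n : nat) (K : coloring n 4).
Hypotheses (K_proper : proper_col K) (n_gt2 : 2 < n).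
Implicit Types x y : vtx n.
Local Notation tr := (transition K).

Lemma rb_card_trans_edges : rb K = (2%:R / n.+1%:R)%R -> #|trans_edges K| = 2 ^ n.
Proof.
have card_E := card_edges (ltnW n_gt2).
have E_neq0 : #|edges n| != 0.
  by apply: contra_eqN card_E => /eqP->; rewrite mul0n eq_sym muln_eq0 expn_eq0.
rewrite /rb => /eqP; rewrite eqr_div ?pnatr_eq0 // -!natrM eqr_nat => /eqP card_TE.
by apply/eqP; rewrite -(eqn_pmul2r (ltn0Sn n)) card_TE mulnC card_E.
Qed.

Lemma card_transition_nbrs_eq2 :
  #|trans_edges K| = 2 ^ n -> forall x, #|[set y | tr x y]| = 2.
Proof.
move=> card_TE x; apply/eqP; move: x; apply/forallP.
have /leqif_sum[_ <-] : forall x, xpredT x ->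
    #|[set y | tr x y]| <= 2 ?= iff (#|[set y | tr x y]| == 2).
  by move=> x _; apply/leqif_eq/card_transition_nbrs_le2.
by rewrite /= -card_trans_edges // card_TE sum_nat_const card_vtx.
Qed.

Definition transition_weight x y : nat := if tr x y then n.-1 else adj x y.

Lemma transition_weightC x y : transition_weight x y = transition_weight y x.
Proof. by rewrite /transition_weight transition_sym adj_sym. Qed.

Lemma sum_transition_weight x b : #|[set y | tr x y]| = 2 -> b != K x ->
  \sum_(y | K y == b) transition_weight x y = n.-1.
Proof.
move=> two_nbrs bx.
case: (pickP [pred y | tr x y && (K y == b)]) => [y0 /andP[xy0 /eqP Ky0]|no_tr_b].
  rewrite (bigD1 y0) /= ?Ky0 // /transition_weight xy0 big1 ?addn0 // => y /andP[/eqP Ky yy0].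
  have not_xy : ~~ adj x y.
    by apply: contra yy0 => xy; apply/eqP/(transition_uniq xy0 xy); rewrite Ky Ky0.
  by case: ifP => [/transition_adj|]; rewrite (negbTE not_xy).
have [y1 [y2 [y12 Y_eq]]] : exists y1 y2, y1 != y2 /\ [set y | tr x y] = [set y1; y2].
  exact/cards2P/eqP.
have xy1 : tr x y1 by have := set21 y1 y2; rewrite -Y_eq inE.
have xy2 : tr x y2 by have := set22 y1 y2; rewrite -Y_eq inE.
have not_tr_b y : K y = b -> ~~ tr x y.
  by move=> Kyb; have := no_tr_b y; rewrite /= Kyb eqxx andbT => ->.
have nbrs_b : [set y | adj x y] :\: [set y | tr x y] = [set y | (K y == b) && adj x y].
  apply/setP => y; rewrite !inE; apply/andP/andP => [[not_xy xy]|[/eqP Kyb xy]].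
    split=> //; apply/eqP.
    apply: (fourth_color (card_colors_transition_nbrs K_proper xy1 xy2 y12)).
      exact: nontransition_nbr_color.
    rewrite !inE (negbTE bx) /=; apply/norP.
    by split; apply/eqP => /esym/not_tr_b; rewrite ?xy1 ?xy2.
  by rewrite not_tr_b.
rewrite (eq_bigr (fun y => if adj x y then 1 else 0)) => [|y /eqP/not_tr_b]; last first.
  by rewrite /transition_weight => /negbTE->.
rewrite -big_mkcondr sum1dep_card -nbrs_b cardsDS.
  by rewrite (card_adj (ltnW n_gt2)) two_nbrs subSS subn1.
by apply/subsetP => y; rewrite !inE; apply: transition_adj.
Qed.

Lemma even_coloring_of_two_transition_nbrs :
  (forall x, #|[set y | tr x y]| = 2) -> even_coloring K.
Proof.
move=> two_nbrs a b; case: (eqVneq a b) => [->//|ab].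
have weight_between c c' : c' != c ->
    \sum_(x | K x == c) \sum_(y | K y == c') transition_weight x y
    = #|[set x | K x == c]| * n.-1.
  move=> c'c; rewrite -sum1dep_card big_distrl /=; apply: eq_bigr => x /eqP Kx.
  by rewrite mul1n sum_transition_weight // Kx.
apply/eqP; rewrite -(@eqn_pmul2r n.-1); last by rewrite -subn1 subn_gt0 ltnW.
rewrite -(weight_between a b) 1?eq_sym // -(weight_between b a) // exchange_big /=.
by apply/eqP/eq_bigr => y _; apply: eq_bigr => x _; apply: transition_weightC.
Qed.

End EvenColorings.

Lemma eq_normal_form n (T : Type) (F : vtx n -> T) (Z : pred 'I_n)
    (d : 'I_n -> vtx n) (nf : vtx n -> vtx n) :
  (forall m k, ~~ Z m -> ~~ Z k -> d m k = (k == m)) ->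
  (forall (x : vtx n) m, ~~ Z m -> F (vadd x (d m)) = F x /\ nf (vadd x (d m)) = nf x) ->
  (forall x : vtx n, (forall k, ~~ Z k -> ~~ x k) -> nf x = x) ->
  forall x, F x = F (nf x).
Proof.
move=> dE invariant nf_id x.
have [N] := ubnP #|[set k | x k && ~~ Z k]|; elim: N x => // N IH x.
case: (set_0Vmem [set k | x k && ~~ Z k]) => [supp0 _|[m]].
  rewrite nf_id // => k Zk; apply/negP => xk.
  have : k \in [set k | x k && ~~ Z k] by rewrite inE xk Zk.
  by rewrite supp0 inE.
rewrite inE => /andP[xm Zm] supp_lt.
have [F_inv nf_inv] := invariant x m Zm.
rewrite -F_inv -nf_inv; apply: IH.
have -> : [set k | vadd x (d m) k && ~~ Z k] = [set k | x k && ~~ Z k] :\ m.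
  apply/setP => k; rewrite !inE vaddE; case: (boolP (Z k)) => Zk; rewrite ?andbF //= dE //.
  by case: (eqVneq k m) => [->|]; rewrite ?xm ?addbF ?andbT.
by move: supp_lt; rewrite (cardsD1 m) inE xm Zm.
Qed.

Definition addb2 (p q : bool * bool) := (p.1 (+) q.1, p.2 (+) q.2).

Section KeyColorings.
Variables (n : nat) (K : coloring n 4).
Implicit Types x y : vtx n.

Lemma color_classes_of_key (key : vtx n -> bool * bool) (phi : bool * bool -> 'I_4)
    (P : bool -> bool -> {set vtx n}) :
  injective phi -> (forall x, K x = phi (key x)) ->
  (forall a b, P a b = [set x | key x == (a, b)]) ->
  color_classes K = [set P a b | a : bool, b : bool].
Proof.
move=> phi_inj K_key P_key.
have class_phi p : [set x | K x == phi p] = [set x | key x == p].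
  by apply/setP => x; rewrite !inE K_key (inj_eq phi_inj).
apply/setP => C; apply/imsetP/imset2P => [[c _ ->]|[a b _ _ ->]].
  have /codomP[[a b] ->] : c \in codom phi.
    by apply: inj_card_onto; rewrite ?card_prod ?card_bool ?card_ord.
  by exists a b; rewrite ?inE // P_key class_phi.
by exists (phi (a, b)); rewrite ?P_key ?class_phi.
Qed.

Hypothesis K_proper : proper_col K.

Lemma coloring_key_inj (key : vtx n -> bool * bool) (base : bool * bool -> vtx n) :
  {morph key : x y / vadd x y >-> addb2 x y} -> cancel base key ->
  (forall x, K x = K (base (key x))) ->
  (forall p, p != (false, false) -> exists2 g, is_gen g & key g = p) ->
  injective (K \o base).
Proof.
move=> keyD baseK K_key gens p q /= Kpq; apply/eqP/negPn/negP => pq.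
have [g g_gen key_g] : exists2 g, is_gen g & key g = addb2 p q.
  by apply: gens; move: pq; case: p q {Kpq} => [[] []] [[] []].
have := proper_adj K_proper (_ : adj (base p) (vadd (base p) g)).
rewrite adj_vadd g_gen => /(_ isT).
rewrite Kpq [K (vadd _ _)]K_key keyD baseK key_g.
by case: p q {Kpq pq key_g} => [[] []] [[] []]; rewrite eqxx.
Qed.

End KeyColorings.

Section CoordinateColorings.
Variables (n : nat) (K : coloring n 4) (i j : 'I_n).
Hypotheses (K_proper : proper_col K) (ij : i != j).
Hypothesis T_ij : trans_edges K = edges_with_sum [pred s | (s == fvec i) || (s == fvec j)].
Implicit Types x z : vtx n.
Local Notation tr := (transition K).
Let n_gt1 : 1 < n := ord_neq_gt1 ij.

Lemma transition_coordE x s : tr x (vadd x s) = is_gen s && ((s == fvec i) || (s == fvec j)).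
Proof. by rewrite (transitionE T_ij) adj_vadd vaddKv. Qed.

Lemma K_vadd_evec z m : m != i -> m != j -> K (vadd z (evec m)) = K z.
Proof.
move=> mi mj; set x := vadd z (one_vec n).
rewrite -vadd_one_fvec -[in RHS](vaddK z (one_vec n)) -/x.
apply: (nontransition_nbrs_same_color K_proper (x := x)
          (y1 := vadd x (fvec i)) (y2 := vadd x (fvec j))).
- by rewrite transition_coordE is_gen_fvec // eqxx.
- by rewrite transition_coordE is_gen_fvec // eqxx orbT.
- by rewrite (inj_eq (@vadd_inj _ x)) (inj_eq (@fvec_inj n)).
- by rewrite adj_vadd is_gen_fvec.
- by rewrite transition_coordE !(inj_eq (@fvec_inj n)) (negbTE mi) (negbTE mj) andbF.
- by rewrite adj_vadd is_gen_one.
- by rewrite transition_coordE !(negbTE (one_vec_neq_fvec _)) andbF.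
Qed.

Definition coord_key x := (x i, x j).

Definition coord_base (p : bool * bool) : vtx n :=
  [ffun m => if m == i then p.1 else if m == j then p.2 else false].

Lemma K_coord_key x : K x = K (coord_base (coord_key x)).
Proof.
apply: (eq_normal_form (Z := [pred m | (m == i) || (m == j)]) (d := @evec n)
                       (nf := fun x => coord_base (coord_key x))) => [m k _ _|y m|y].
- exact: evecE.
- rewrite negb_or => /andP[mi mj]; split; first exact: K_vadd_evec.
  by rewrite /coord_key !vaddE !evecE ![_ == m]eq_sym (negbTE mi) (negbTE mj) !addbF.
- move=> y_supp; apply/ffunP => m; rewrite ffunE.
  case: (eqVneq m i) => [->//|mi]; case: (eqVneq m j) => [->//|mj].
  by apply/esym/negbTE/y_supp; rewrite negb_or mi mj.
Qed.

Lemma coordinate_coloring :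
  color_classes K = [set [set x : vtx n | (x i == a) && (x j == b)] | a : bool, b : bool].
Proof.
apply: (color_classes_of_key (key := coord_key) (phi := K \o coord_base)) => [||a b].
- apply: (coloring_key_inj K_proper) => [x y|[a b]||p]; last 2 first.
  + exact: K_coord_key.
  + case: p => [[] []] // _; [exists (one_vec n) | exists (fvec j) | exists (fvec i)];
      by rewrite ?is_gen_one ?is_gen_fvec // /coord_key ?fvecE ?ffunE ?eqxx ?ij // eq_sym ij.
  + by rewrite /coord_key !vaddE.
  + by rewrite /coord_key !ffunE eqxx eq_sym (negbTE ij) eqxx.
- exact: K_coord_key.
- by apply/setP => x; rewrite !inE.
Qed.

End CoordinateColorings.

Section ParityColorings.
Variables (n : nat) (K : coloring n 4) (j k : 'I_n).
Hypotheses (K_proper : proper_col K) (jk : j != k).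
Hypothesis T_j : trans_edges K = edges_with_sum [pred s | (s == one_vec n) || (s == fvec j)].
Implicit Types x z : vtx n.
Local Notation tr := (transition K).
Let n_gt1 : 1 < n := ord_neq_gt1 jk.

Lemma transition_parityE x s :
  tr x (vadd x s) = is_gen s && ((s == one_vec n) || (s == fvec j)).
Proof. by rewrite (transitionE T_j) adj_vadd vaddKv. Qed.

Lemma not_transition_fvec x m : m != j -> ~~ tr x (vadd x (fvec m)).
Proof.
move=> mj; rewrite transition_parityE eq_sym (negbTE (one_vec_neq_fvec _)).
by rewrite (inj_eq (@fvec_inj n)) (negbTE mj) andbF.
Qed.

Lemma K_vadd_evec2 z m : m != j -> m != k ->
  K (vadd z (vadd (evec m) (evec k))) = K z.
Proof.
move=> mj mk; set x := vadd z (fvec m).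
rewrite -vadd_fvec_fvec -[in RHS](vaddK z (fvec m)) -/x.
apply: (nontransition_nbrs_same_color K_proper (x := x)
          (y1 := vadd x (one_vec n)) (y2 := vadd x (fvec j))).
- by rewrite transition_parityE is_gen_one // eqxx.
- by rewrite transition_parityE is_gen_fvec // eqxx orbT.
- by rewrite (inj_eq (@vadd_inj _ x)) one_vec_neq_fvec.
- by rewrite adj_vadd is_gen_fvec.
- by apply: not_transition_fvec; rewrite eq_sym.
- by rewrite adj_vadd is_gen_fvec.
- exact: not_transition_fvec.
Qed.

Definition parity_key x := (odd (wt x), x j).

Definition parity_base (p : bool * bool) : vtx n :=
  [ffun m => if m == j then p.2 else if m == k then p.1 (+) p.2 else false].

Lemma parity_keyD : {morph parity_key : x y / vadd x y >-> addb2 x y}.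
Proof. by move=> x y; rewrite /parity_key odd_wt_vadd vaddE. Qed.

Lemma parity_baseK : cancel parity_base parity_key.
Proof.
move=> [a b]; rewrite /parity_key (odd_wt_supp2 jk) => [|m mj mk]; last first.
  by rewrite ffunE (negbTE mj) (negbTE mk).
by rewrite !ffunE eqxx eq_sym (negbTE jk) eqxx (addbC a) addKb.
Qed.

Lemma K_parity_key x : K x = K (parity_base (parity_key x)).
Proof.
apply: (eq_normal_form (Z := [pred m | (m == j) || (m == k)])
          (d := fun m => vadd (evec m) (evec k))
          (nf := fun x => parity_base (parity_key x))) => [m l _|y m|y].
- by rewrite negb_or => /andP[_ lk]; rewrite vaddE !evecE (negbTE lk) addbF.
- rewrite negb_or => /andP[mj mk]; split; first exact: K_vadd_evec2.
  rewrite /= parity_keyD.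
  have -> : parity_key (vadd (evec m) (evec k)) = (false, false).
    by rewrite parity_keyD /parity_key !wt_evec !evecE [j == m]eq_sym (negbTE mj) (negbTE jk).
  by case: parity_key => a b; rewrite /addb2 /= !addbF.
- move=> y_supp; rewrite /parity_key (odd_wt_supp2 jk) => [|m mj mk]; last first.
    by apply: y_supp; rewrite negb_or mj mk.
  apply/ffunP => m; rewrite ffunE.
  case: (eqVneq m j) => [->//|mj]; case: (eqVneq m k) => [->|mk].
    by rewrite addbC addKb.
  by apply/esym/negbTE/y_supp; rewrite negb_or mj mk.
Qed.

Lemma parity_coloring_even : ~~ odd n.
Proof.
apply/negP => n_odd.
have := proper_adj K_proper (_ : adj (vzero n) (fvec j)).
rewrite adjE vadd0v is_gen_fvec // => /(_ isT)/eqP; apply.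
rewrite K_parity_key [RHS]K_parity_key /parity_key wt0 wt_fvec.
by rewrite (odd_pred (ltnW n_gt1)) n_odd fvecE !ffunE eqxx.
Qed.

Lemma parity_coloring : color_classes K =
  [set [set v : vtx n | (odd (wt v) == nu) && (v j == mu)] | nu : bool, mu : bool].
Proof.
apply: (color_classes_of_key (key := parity_key) (phi := K \o parity_base)) => [||a b].
- apply: (coloring_key_inj K_proper parity_keyD parity_baseK) => [|p].
    exact: K_parity_key.
  case: p => [[] []] // _; [exists (fvec k) | exists (fvec j) | exists (one_vec n)];
    by rewrite ?is_gen_one ?is_gen_fvec // /parity_key ?wt_one ?wt_fvec
      ?(odd_pred (ltnW n_gt1)) ?(negbTE parity_coloring_even) ?fvecE ?ffunE ?eqxx ?jk.
- exact: K_parity_key.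
- by apply/setP => x; rewrite !inE.
Qed.

End ParityColorings.

Theorem theorem5p3 (n : nat) (K : coloring n 4) :
  3 <= n -> proper_col K ->
  (forall i j : 'I_n, i < j ->
     trans_edges K = edges_with_sum [pred s | (s == fvec i) || (s == fvec j)] ->
     color_classes K =
       [set [set x : vtx n | (x i == a) && (x j == b)] | a : bool, b : bool])
  /\
  (forall j : 'I_n,
     trans_edges K = edges_with_sum [pred s | (s == one_vec n) || (s == fvec j)] ->
     ~~ odd n /\
     color_classes K =
       [set [set v : vtx n | (odd (wt v) == nu) && (v j == mu)] | nu : bool, mu : bool])
  /\
  (rb K = (2%:R / (n.+1)%:R)%R -> even_coloring K).
Proof.
move=> n_gt2 K_proper; split; [|split].
- move=> i j ij T_ij; apply: (coordinate_coloring K_proper _ T_ij).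
  by rewrite neq_ltn ij.
- move=> j T_j; have [k kj] := exists_neq j (ltnW n_gt2).
  have jk : j != k by rewrite eq_sym.
  by split; [exact: (parity_coloring_even K_proper jk T_j) |
             exact: (parity_coloring K_proper jk T_j)].
- move/(rb_card_trans_edges n_gt2)/(card_transition_nbrs_eq2 K_proper n_gt2).
  exact: even_coloring_of_two_transition_nbrs.
Qed.
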